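(* Let $K=2^m$ with $m\in\mathbb{N}$ and let $\Phi$ be the $K\times K$ Sylvester Hadamard matrix. Among all matrices of the form $Z=\Phi\,\mathrm{diag}(0,a)\,\Phi^T\in\mathbb{R}^{K\times K}$ with $a\in\mathbb{R}^{K-1}_{\ge0}$ satisfying $Z_{cc}-Z_{c'c}>0$ for all $c'\neq c$, the minimum possible rank is exactly $m=\log_2K$.
   Context: Sylvester Hadamard matrices: $\Phi_1=(1)$, $\Phi_{2^m}=\begin{bmatrix}\Phi_{2^{m-1}}&\Phi_{2^{m-1}}\\ \Phi_{2^{m-1}}&-\Phi_{2^{m-1}}\end{bmatrix}$. $\mathrm{diag}(0,a)$ is the $K\times K$ diagonal matrix with diagonal $(0,a_1,\dots,a_{K-1})$. *)

From HB Require Import structures.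
From mathcomp Require Import all_boot all_order all_algebra.
From mathcomp Require Import reals.
Set Implicit Arguments. Unset Strict Implicit. Unset Printing Implicit Defensive.
Import Order.TTheory GRing.Theory Num.Theory.
Local Open Scope ring_scope.

Lemma expn2_double (m : nat) : (2 ^ m + 2 ^ m)%N = (2 ^ m.+1)%N.
Proof. by rewrite addnn -mul2n -expnS. Qed.

Fixpoint sylvester (R : pzRingType) (m : nat) : 'M[R]_(2 ^ m) :=
  match m return 'M[R]_(2 ^ m) with
  | 0 => 1%:M
  | m'.+1 =>
      let H := sylvester R m' in
      castmx (expn2_double m', expn2_double m') (block_mx H H H (- H))
  end.

Lemma one_add_pred_pow2 (m : nat) : (1 + (2 ^ m).-1)%N = (2 ^ m)%N.
Proof. by rewrite add1n prednK // expn_gt0. Qed.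

Definition diag0 (R : pzRingType) (m : nat) (a : 'rV[R]_((2 ^ m).-1)) : 'M[R]_(2 ^ m) :=
  diag_mx (castmx (erefl 1%N, one_add_pred_pow2 m) (row_mx (0 : 'rV[R]_1) a)).

Definition Zmat (R : pzRingType) (m : nat) (a : 'rV[R]_((2 ^ m).-1)) : 'M[R]_(2 ^ m) :=
  sylvester R m *m diag0 a *m (sylvester R m)^T.

(* Write the Sylvester matrix as Phi_cj = (-1)^<c,j>, where <c,j> is the parity of
   the binary digits that c and j share.  Then
   Z_cc - Z_c'c = 2 * (sum of the entries of diag(0,a) over the columns j with
   Phi_cj <> Phi_c'j), while rank Z is the size of the support of diag(0,a)
   because Phi is invertible.  Already Z_cc <> Z_c'c for all c' <> c forces the
   support columns to separate the 2^m rows of Phi, which takes at least m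
   columns; the m columns j = 2^i, which read off the binary digits of c, suffice. *)

From HB Require Import structures.
From mathcomp Require Import all_boot all_order all_algebra.
From mathcomp Require Import reals ring.
Import Order.TTheory GRing.Theory Num.Theory.

Fixpoint sylvester_sign (m c j : nat) : bool :=
  if m is m'.+1 then
    (odd (c %/ 2 ^ m') && odd (j %/ 2 ^ m'))
      (+) sylvester_sign m' (c %% 2 ^ m') (j %% 2 ^ m')
  else false.

Lemma sylvester_sign0 m c : sylvester_sign m c 0 = false.
Proof. by elim: m c => //= m IHm c; rewrite div0n mod0n andbF IHm. Qed.

Lemma sylvester_sign_pow2_separates m c c' : c < 2 ^ m -> c' < 2 ^ m -> c != c' ->
  exists2 i, i < m & sylvester_sign m c (2 ^ i) != sylvester_sign m c' (2 ^ i).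
Proof.
elim: m c c' => [|m IHm] c c'; first by rewrite expn0 !ltnS !leqn0 => /eqP-> /eqP->.
rewrite expnS => lt_c lt_c' neq_cc'.
have pos : 0 < 2 ^ m by rewrite expn_gt0.
have top x : sylvester_sign m.+1 x (2 ^ m) = odd (x %/ 2 ^ m).
  by rewrite /= divnn pos modnn sylvester_sign0 andbT addbF.
have low i x : i < m ->
    sylvester_sign m.+1 x (2 ^ i) = sylvester_sign m (x %% 2 ^ m) (2 ^ i).
  move=> lt_im; have lt_i : 2 ^ i < 2 ^ m by rewrite ltn_exp2l.
  by rewrite /= (divn_small lt_i) (modn_small lt_i) andbF.
have [eq_top | ne_top] := eqVneq (odd (c %/ 2 ^ m)) (odd (c' %/ 2 ^ m)); last first.
  by exists m; rewrite // !top.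
have [|i lt_im] := IHm (c %% 2 ^ m) (c' %% 2 ^ m) (ltn_pmod _ pos) (ltn_pmod _ pos).
  apply: contra neq_cc' => /eqP eq_low; apply/eqP.
  have bit x : x < 2 * 2 ^ m -> x %/ 2 ^ m = odd (x %/ 2 ^ m).
    by rewrite -ltn_divLR //; case: (x %/ 2 ^ m) => [|[|]].
  rewrite [c](divn_eq c (2 ^ m)) [c'](divn_eq c' (2 ^ m)).
  by rewrite (bit c) // (bit c') // eq_top eq_low.
by exists i; [exact: ltnW | rewrite !low].
Qed.

Lemma leq_card_separating (T I : finType) (S : {set I}) (s : T -> I -> bool) :
    (forall t t', t != t' -> exists2 j, j \in S & s t j != s t' j) ->
  #|T| <= 2 ^ #|S|.
Proof.
move=> sep; pose g t := S :&: [set j | s t j].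
have g_inj : injective g.
  move=> t t' eq_g; apply/eqP; apply: contraT => /sep[j jS].
  by move/setP: eq_g => /(_ j); rewrite !inE jS /= => ->; rewrite eqxx.
rewrite -card_powerset -cardsT -(card_imset _ g_inj) subset_leq_card //.
by apply/subsetP => _ /imsetP[t _ ->]; rewrite powersetE subsetIl.
Qed.

Local Open Scope ring_scope.

Lemma mxrank_scalar (F : fieldType) n (a : F) :
  \rank (a%:M : 'M_n) = ((a != 0%R) * n)%N.
Proof.
have [->|nz] := eqVneq a 0; first by rewrite raddf0 mxrank0.
by rewrite -scalemx1 (eqmx_scale _ nz) mxrank1 mul1n.
Qed.

Lemma mxrank_diag (F : fieldType) n (d : 'rV[F]_n) :
  \rank (diag_mx d) = #|[set j | d 0 j != 0]|.
Proof.
rewrite -sum1_card big_mkcond /=; under eq_bigr do rewrite inE.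
elim: n d => [|n IHn] d; first by rewrite flatmx0 mxrank0 big_ord0.
move: d; rewrite -[n.+1]/(1 + n)%N => d.
rewrite -[d]hsubmxK diag_mx_row rank_diag_block_mx IHn big_split_ord big_ord1 /=.
congr (_ + _)%N; last by apply: eq_bigr => j _; rewrite row_mxEr.
have -> : diag_mx (lsubmx d) = (lsubmx d 0 0)%:M.
  by apply/matrixP => i j; rewrite !ord1 !mxE.
by rewrite mxrank_scalar muln1 row_mxEl; case: (_ != _).
Qed.

Lemma sylvester_mulmx_tr (R : pzRingType) m :
  sylvester R m *m (sylvester R m)^T = (2 ^ m)%:R%:M.
Proof.
elim: m => [|m IHm]; first by rewrite /= trmx1 mulmx1.
have -> : (2 ^ m.+1)%:R = (2 ^ m)%:R + (2 ^ m)%:R :> R by rewrite -natrD expn2_double.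
rewrite [sylvester _ m.+1]/=.
case: (2 ^ m.+1)%N / (expn2_double m); rewrite castmx_id tr_block_mx mulmx_block.
rewrite !linearN /= mulmxN mulNmx mulNmx mulmxN opprK IHm subrr.
by rewrite -(raddfD (@scalar_mx _ _)) -scalar_mx_block.
Qed.

Lemma sylvesterE (R : pzRingType) m (c j : 'I_(2 ^ m)) :
  sylvester R m c j = (-1) ^+ sylvester_sign m c j.
Proof.
elim: m c j => [|m IHm] c j; first by rewrite !ord1 mxE.
have pos : (0 < 2 ^ m)%N by rewrite expn_gt0.
have lo (k : 'I_(2 ^ m)) : (k %/ 2 ^ m = 0)%N * (k %% 2 ^ m = k)%N.
  by rewrite divn_small ?modn_small.
have hi (k : 'I_(2 ^ m)) : ((2 ^ m + k) %/ 2 ^ m = 1)%N * ((2 ^ m + k) %% 2 ^ m = k)%N.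
  by rewrite divnDl // divnn pos lo modnDl lo.
rewrite [sylvester _ _]/= castmxE /= !mxE.
by case: splitP => k /= -> {c}; rewrite !mxE; case: splitP => l /= -> {j};
  rewrite ?mxE !(lo, hi) IHm /= ?andbF ?signrN.
Qed.

Lemma sylvester_unitmx (R : comUnitRingType) m :
  (2%:R : R) \is a GRing.unit -> sylvester R m \in unitmx.
Proof.
move=> unit2; rewrite unitmxE; have := congr1 determinant (sylvester_mulmx_tr R m).
rewrite det_mulmx det_tr det_scalar natrX => /(congr1 (fun x => x \is a GRing.unit)).
by rewrite unitrM andbb unitrX ?unitrX // => ->.
Qed.

Lemma diag0_row (R : pzRingType) m (f : nat -> R) : f 0%N = 0 ->
  forall j, diag0 (\row_(k < (2 ^ m).-1) f k.+1) j j = f j.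
Proof.
move=> f0 j; rewrite mxE eqxx mulr1n castmxE mxE.
by case: splitP => k /= ->; rewrite ?ord1 mxE.
Qed.

Lemma Zmat_diag_sub (R : comNzRingType) m (a : 'rV[R]_((2 ^ m).-1)) (c c' : 'I_(2 ^ m)) :
  Zmat a c c - Zmat a c' c =
  2 * \sum_(j < 2 ^ m | sylvester_sign m c j != sylvester_sign m c' j) diag0 a j j.
Proof.
have Zmat_entry i k :
    Zmat a i k = \sum_(j < 2 ^ m) sylvester R m i j * sylvester R m k j * diag0 a j j.
  rewrite /Zmat {1}/diag0 mul_mx_diag !mxE; apply: eq_bigr => j _.
  by rewrite !mxE eqxx mulr1n mulrAC.
rewrite !Zmat_entry -sumrB mulr_sumr [RHS]big_mkcond; apply: eq_bigr => j _.
rewrite !sylvesterE.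
by case: (sylvester_sign m c j); case: (sylvester_sign m c' j); rewrite /= ?expr0 ?expr1; ring.
Qed.

Section RankBounds.

Variables (R : numFieldType) (m : nat).
Implicit Type a : 'rV[R]_((2 ^ m).-1).

Lemma mxrank_Zmat a : \rank (Zmat a) = #|[set j | diag0 a j j != 0]|.
Proof.
have Phi_unit : sylvester R m \in unitmx by rewrite sylvester_unitmx ?unitfE ?pnatr_eq0.
rewrite /Zmat mxrankMfree ?row_free_unit ?unitmx_tr //.
rewrite -mxrank_tr trmx_mul mxrankMfree ?row_free_unit ?unitmx_tr // mxrank_tr.
by rewrite mxrank_diag; apply: eq_card => j; rewrite !inE mxE eqxx mulr1n.
Qed.

Lemma leq_mxrank_Zmat a :
    (forall c c' : 'I_(2 ^ m), c' != c -> Zmat a c' c != Zmat a c c) ->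
  (m <= \rank (Zmat a))%N.
Proof.
move=> Z_sep; rewrite mxrank_Zmat -(@leq_exp2l 2) // -{1}(card_ord (2 ^ m)).
apply: (@leq_card_separating _ _ _ (fun c j : 'I_(2 ^ m) => sylvester_sign m c j)).
move=> c c' neq_cc'; have [j /andP[nz_j sign_j] | none] :=
  pickP [pred j | (diag0 a j j != 0) && (sylvester_sign m c j != sylvester_sign m c' j)].
  by exists j; rewrite ?inE.
have /Z_sep : c' != c by rewrite eq_sym.
rewrite eq_sym -subr_eq0 Zmat_diag_sub big1 ?mulr0 ?eqxx // => j sign_j.
by apply/eqP; have := none j; rewrite /= sign_j andbT => /negbFE.
Qed.

Definition pow2_weights : 'rV[R]_((2 ^ m).-1) :=
  \row_(k < (2 ^ m).-1) [exists i : 'I_m, k.+1 == 2 ^ i]%N%:R.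

Lemma diag0_pow2_weights (j : 'I_(2 ^ m)) :
  diag0 pow2_weights j j = [exists i : 'I_m, j == 2 ^ i :> nat]%N%:R.
Proof.
apply: (@diag0_row R m (fun n => [exists i : 'I_m, n == 2 ^ i]%N%:R)).
by apply/eqP; rewrite pnatr_eq0 eqb0; apply/existsP => -[i]; rewrite eq_sym expn_eq0.
Qed.

Lemma pow2_ord_subproof (i : 'I_m) : (2 ^ i < 2 ^ m)%N.
Proof. by rewrite ltn_exp2l. Qed.

Definition pow2_ord (i : 'I_m) : 'I_(2 ^ m) := Ordinal (pow2_ord_subproof i).

Lemma Zmat_pow2_weights_sep (c c' : 'I_(2 ^ m)) :
  c' != c -> 0 < Zmat pow2_weights c c - Zmat pow2_weights c' c.
Proof.
rewrite eq_sym => neq_cc'.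
have [i lt_im sign_i] := sylvester_sign_pow2_separates _ _ _ (ltn_ord c) (ltn_ord c') neq_cc'.
rewrite Zmat_diag_sub (bigD1 (pow2_ord (Ordinal lt_im))) //= pmulr_rgt0 //.
rewrite diag0_pow2_weights (_ : [exists _, _] = true); last first.
  by apply/existsP; exists (Ordinal lt_im).
by rewrite ltr_pwDl ?sumr_ge0 // => j _; rewrite diag0_pow2_weights.
Qed.

Lemma pow2_ord_inj : injective pow2_ord.
Proof. by move=> i i' /(congr1 val)/eqP; rewrite /= eqn_exp2l // => /eqP/val_inj. Qed.

Lemma mxrank_Zmat_pow2_weights : \rank (Zmat pow2_weights) = m.
Proof.
rewrite mxrank_Zmat -[m in RHS]card_ord -cardsT -(card_imset _ pow2_ord_inj).
apply: eq_card => j; rewrite !inE diag0_pow2_weights pnatr_eq0 eqb0 negbK.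
apply/existsP/imsetP => -[i]; first by move/eqP=> eq_j; exists i => //; apply: val_inj.
by move=> _ ->; exists i.
Qed.

End RankBounds.

Theorem propositionC1 (R : realType) (m : nat) :
  (exists a : 'rV[R]_((2 ^ m).-1),
      (forall j, 0 <= a 0 j) /\
      (forall c c' : 'I_(2 ^ m), c' != c -> Zmat a c c - Zmat a c' c > 0) /\
      \rank (Zmat a) = m)
  /\
  (forall a : 'rV[R]_((2 ^ m).-1),
      (forall j, 0 <= a 0 j) ->
      (forall c c' : 'I_(2 ^ m), c' != c -> Zmat a c c - Zmat a c' c > 0) ->
      (m <= \rank (Zmat a))%N).
Proof.
split.
  exists (pow2_weights R m); split; first by move=> j; rewrite mxE.
  by split; [exact: Zmat_pow2_weights_sep | exact: mxrank_Zmat_pow2_weights].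
move=> a _ Z_sep; apply: leq_mxrank_Zmat => c c' /Z_sep.
by rewrite subr_gt0 => /lt_eqF ->.
Qed.
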